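(* Let $n\ge16$ be such that $K=n/\log_2n$ is an integer, let $0\le c<1$, $0<\delta\le q$ with $K(1-c)\ge16\ln n$, and let $\mathbf A(\lambda)=\begin{bmatrix}0&1-\delta\lambda\\-c&1+c-q\lambda\end{bmatrix}$. If $\lambda\ge\frac{4(1-c)\ln n}{(q-c\delta)K}$, $\delta\lambda\le1$ and $q\lambda\le1+c$, then $$\|\mathbf A^K(\lambda)\|\le\frac{\sqrt6}{n^2\log_2n}\le1.$$
   Context: $\|\cdot\|$ denotes the spectral norm. *)

From HB Require Import structures.
From mathcomp Require Import all_boot all_order all_algebra.
From mathcomp Require Import all_classical all_reals all_analysis.
Set Implicit Arguments. Unset Strict Implicit. Unset Printing Implicit Defensive.
Import Order.TTheory GRing.Theory Num.Theory.
Local Open Scope ring_scope.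
Local Open Scope classical_set_scope.

Definition vnorm2 {R : realType} {n : nat} (v : 'cV[R]_n) : R :=
  Num.sqrt (\sum_(i < n) v i 0 ^+ 2).

Definition specnorm {R : realType} {m n : nat} (A : 'M[R]_(m, n)) : R :=
  sup [set vnorm2 (A *m x) | x in [set x : 'cV[R]_n | vnorm2 x <= 1]].

Definition log2 {R : realType} (x : R) : R := ln x / ln 2.

Definition Amat {R : realType} (c delta q lam : R) : 'M[R]_2 :=
  \matrix_(i < 2, j < 2)
    if i == 0 then (if j == 0 then 0 else 1 - delta * lam)
    else (if j == 0 then - c else 1 + c - q * lam).

From mathcomp Require Import all_boot all_order all_algebra.
From mathcomp Require Import all_classical all_reals all_analysis.
From mathcomp Require Import ring lra.
Set Implicit Arguments.
Unset Strict Implicit.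
Import Order.TTheory GRing.Theory Num.Theory.
Local Open Scope ring_scope.

(* With a = 1 - delta lam, b = 1 + c - q lam and e = a c, the powers of
   A = [[0, a], [-c, b]] are expressed through the Lucas sequence U_k(b, e) of
   the characteristic polynomial X^2 - b X + e.  When both roots of this
   polynomial have modulus at most rho, |U_(k+1)| <= (k+1) rho^k: for real
   roots r1 >= r2 >= 0 because U_(k+1) = r1 U_k + r2^k, for complex roots by
   the Cassini identity.  The hypotheses give this with rho = 1 - 3 ln n / K,
   and rho^K <= exp (-3 ln n) = n^-3, so the Frobenius norm of A^K is at most
   sqrt 6 K / n^3 = sqrt 6 / (n^2 log2 n). *)

Section LucasSequence.
Variables (R : comPzRingType) (b e : R).

Fixpoint lucasU (k : nat) : R :=
  match k with
  | 0 => 0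
  | 1 => 1
  | (k'.+1 as k1).+1 => b * lucasU k1 - e * lucasU k'
  end.

Lemma lucasU0 : lucasU 0 = 0. Proof. by []. Qed.
Lemma lucasU1 : lucasU 1 = 1. Proof. by []. Qed.

Lemma lucasU_recr k : lucasU k.+2 = b * lucasU k.+1 - e * lucasU k.
Proof. by []. Qed.

Lemma lucasU_cassini k :
  lucasU k.+1 ^+ 2 - b * lucasU k.+1 * lucasU k + e * lucasU k ^+ 2 = e ^+ k.
Proof.
elim: k => [|k IH]; first by rewrite /= expr0; ring.
by rewrite lucasU_recr [e ^+ k.+1]exprS -IH; ring.
Qed.

End LucasSequence.

Arguments lucasU {R} b e k : simpl never.

Section LucasBounds.
Variables (R : realFieldType) (b e : R).
Local Notation U := (lucasU b e).

Lemma lucasU_real_roots_bound (r1 r2 rho : R) :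
  r1 + r2 = b -> r1 * r2 = e -> 0 <= r2 <= r1 -> r1 <= rho ->
  forall k, 0 <= U k.+1 <= k.+1%:R * rho ^+ k.
Proof.
move=> sum_r prod_r /andP[r2_ge0 r21] r1rho.
have r1_ge0 : 0 <= r1 := le_trans r2_ge0 r21.
have rho_ge0 : 0 <= rho := le_trans r1_ge0 r1rho.
have U_step k : U k.+1 = r1 * U k + r2 ^+ k.
  elim: k => [|k IH]; first by rewrite /= mulr0 add0r.
  rewrite lucasU_recr IH; move: (U k) => Uk.
  by rewrite exprS -sum_r -prod_r; ring.
elim=> [|k /andP[Uk_ge0 Uk_le]]; first by rewrite /= expr0 mulr1 ler01 lexx.
rewrite U_step addr_ge0 ?mulr_ge0 ?exprn_ge0 //=.
have r2k : r2 ^+ k.+1 <= rho ^+ k.+1 by rewrite lerXn2r ?nnegrE ?(le_trans r21).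
apply: le_trans (lerD (ler_pM r1_ge0 Uk_ge0 r1rho Uk_le) r2k) _.
by rewrite exprS -[k.+2%:R]natr1; lra.
Qed.

Lemma lucasU_complex_roots_bound (g : R) :
  0 <= b -> 0 <= g -> g ^+ 2 = e -> b <= 2 * g ->
  forall k, `|U k.+1| <= k.+1%:R * g ^+ k.
Proof.
move=> b_ge0 g_ge0 g2e b2g.
elim=> [|k IH]; first by rewrite /= expr0 mulr1 normr1.
have step : `|U k.+2| <= g * `|U k.+1| + g ^+ k.+1.
  have cas := lucasU_cassini b e k.+1.
  set t := U k.+2 in cas *; set u := U k.+1 in cas *; set G := g ^+ k.+1.
  rewrite -g2e exprAC -/G in cas.
  have btu : b * t * u <= 2 * g * (`|t| * `|u|).
    rewrite -mulrA; apply: le_trans (ler_wpM2l b_ge0 (ler_norm (t * u))) _.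
    by rewrite normrM ler_wpM2r ?mulr_ge0.
  have : (`|t| - g * `|u|) ^+ 2 <= G ^+ 2.
    by rewrite -cas -[t ^+ 2]real_normK ?num_real // -[u ^+ 2]real_normK ?num_real //; nra.
  have := exprn_ge0 k.+1 g_ge0; rewrite -/G; nra.
apply: le_trans step _.
have := ler_wpM2l g_ge0 IH.
by rewrite exprS -[k.+2%:R]natr1; lra.
Qed.

End LucasBounds.

(* The hypotheses say that both roots of [X^2 - b X + e] have modulus at most [rho]. *)
Lemma lucasU_bound (R : rcfType) (b e rho : R) :
  0 <= b -> 0 <= e -> e <= rho ^+ 2 -> b <= 2 * rho -> 0 <= rho ^+ 2 - b * rho + e ->
  forall k, `|lucasU b e k.+1| <= k.+1%:R * rho ^+ k.
Proof.
move=> b_ge0 e_ge0 e_le b_le disc_rho k.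
have rho_ge0 : 0 <= rho by lra.
have [disc_ge0 | disc_lt0] := lerP (4 * e) (b ^+ 2).
- set r := Num.sqrt (b ^+ 2 - 4 * e).
  have r_ge0 : 0 <= r := sqrtr_ge0 _.
  have r2 : r ^+ 2 = b ^+ 2 - 4 * e by rewrite sqr_sqrtr // subr_ge0.
  have r_le_b : r <= b by rewrite -ler_sqr ?nnegrE // r2; lra.
  have r_le : r <= 2 * rho - b by rewrite -ler_sqr ?nnegrE ?subr_ge0 // r2; nra.
  have sum_r : (b + r) / 2 + (b - r) / 2 = b by field.
  have prod_r : (b + r) / 2 * ((b - r) / 2) = e.
    have -> : (b + r) / 2 * ((b - r) / 2) = (b ^+ 2 - r ^+ 2) / 4 by field.
    by rewrite r2; field.
  have roots_le : 0 <= (b - r) / 2 <= (b + r) / 2 by apply/andP; split; lra.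
  have root_le : (b + r) / 2 <= rho by lra.
  have /andP[U_ge0 U_le] := lucasU_real_roots_bound sum_r prod_r roots_le root_le k.
  by rewrite ger0_norm.
- have g_ge0 : 0 <= Num.sqrt e := sqrtr_ge0 _.
  have g2 : Num.sqrt e ^+ 2 = e by rewrite sqr_sqrtr.
  apply: le_trans (lucasU_complex_roots_bound b_ge0 g_ge0 g2 _ k) _.
    by rewrite -ler_sqr ?nnegrE ?mulr_ge0 // exprMn g2; lra.
  by rewrite ler_wpM2l // lerXn2r ?nnegrE // -ler_sqr ?nnegrE // g2.
Qed.

Definition mx2 {R : Type} (x y z w : R) : 'M[R]_2 :=
  \matrix_(i < 2, j < 2)
    if i == 0 then (if j == 0 then x else y) else (if j == 0 then z else w).

Lemma Amat_mx2 (R : realType) (c delta q lam : R) :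
  Amat c delta q lam = mx2 0 (1 - delta * lam) (- c) (1 + c - q * lam).
Proof. by []. Qed.

Lemma mulmx2 (R : pzSemiRingType) (x y z w x' y' z' w' : R) :
  mx2 x y z w *m mx2 x' y' z' w' =
  mx2 (x * x' + y * z') (x * y' + y * w') (z * x' + w * z') (z * y' + w * w').
Proof.
apply/matrixP => i j; rewrite !mxE !big_ord_recl big_ord0 addr0 !mxE.
by case: i => [[|[|//]]] ?; case: j => [[|[|//]]] ?.
Qed.

Lemma mx2_exp_lucasU (R : comPzRingType) (a b c : R) k :
  let U := lucasU b (a * c) in
  mx2 0 a (- c) b ^+ k.+1 = mx2 (- (a * c) * U k) (a * U k.+1) (- c * U k.+1) (U k.+2).
Proof.
move=> U; elim: k => [|k IH].
  by rewrite expr1 /U lucasU_recr lucasU1 lucasU0; congr mx2; ring.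
rewrite exprSr IH -mulmxE mulmx2 /U.
by congr mx2; rewrite ?lucasU_recr; ring.
Qed.

Lemma specnorm_mx2_le (R : realType) (x y z w : R) :
  specnorm (mx2 x y z w) <= Num.sqrt (x ^+ 2 + y ^+ 2 + z ^+ 2 + w ^+ 2).
Proof.
have sum2 (F : 'I_2 -> R) : \sum_(i < 2) F i = F 0 + F 1.
  by rewrite !big_ord_recl big_ord0 addr0; congr (F _ + F _); apply: val_inj.
rewrite /specnorm; apply: ge_sup.
  exists (vnorm2 (mx2 x y z w *m 0)); exists 0 => //.
  by rewrite /= /vnorm2 big1 ?sqrtr0 // => i _; rewrite mxE expr0n.
move=> _ [v /= v_le1 <-].
move: v_le1; rewrite /vnorm2 -[X in _ <= X]sqrtr1 ler_sqrt // sum2 => v_le1.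
rewrite ler_sqrt ?addr_ge0 ?sqr_ge0 // sum2 !mxE !sum2 !mxE /=.
set v0 := v 0 0 in v_le1 *; set v1 := v 1 0 in v_le1 *.
have cs1 := sqr_ge0 (x * v1 - y * v0); have cs2 := sqr_ge0 (z * v1 - w * v0).
have := sqr_ge0 x; have := sqr_ge0 y; have := sqr_ge0 z; have := sqr_ge0 w.
nra.
Qed.

Lemma companion_frobenius_le (R : realFieldType) (rho a c e : R) (s : nat -> R) m :
  13 / 16 <= rho -> `|a| <= 1 -> `|c| <= 1 -> `|e| <= rho ^+ 2 ->
  (forall k, `|s k.+1| <= k.+1%:R * rho ^+ k) ->
  (e * s m.+1) ^+ 2 + (a * s m.+2) ^+ 2 + (c * s m.+2) ^+ 2 + s m.+3 ^+ 2
    <= 6 * (m.+2%:R * rho ^+ m.+2) ^+ 2.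
Proof.
move=> rho_ge a_le1 c_le1 e_le s_le.
have rho_ge0 : 0 <= rho by lra.
have sq_le (x y : R) : `|x| <= y -> x ^+ 2 <= y ^+ 2.
  move=> xy; rewrite -real_normK ?num_real //.
  by apply: lerXn2r; rewrite ?nnegrE // (le_trans _ xy).
have es : `|e * s m.+1| <= m.+1%:R * rho * rho ^+ m.+1.
  rewrite normrM; apply: le_trans (ler_pM (normr_ge0 _) (normr_ge0 _) e_le (s_le m)) _.
  by rewrite expr2 exprS; lra.
have scaled_s_le t : `|t| <= 1 -> `|t * s m.+2| <= m.+2%:R * rho ^+ m.+1.
  move=> t_le1; rewrite normrM.
  by apply: le_trans (ler_pM (normr_ge0 _) (normr_ge0 _) t_le1 (s_le m.+1)) _; rewrite mul1r.
have s3 : `|s m.+3| <= m.+3%:R * rho * rho ^+ m.+1 by rewrite -mulrA -exprS.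
rewrite [rho ^+ m.+2]exprS.
move: es (scaled_s_le _ a_le1) (scaled_s_le _ c_le1) s3 => /sq_le es /sq_le as_ /sq_le cs /sq_le s3.
have K_ge2 : 2 <= m.+2%:R :> R by rewrite ler_nat.
have Km1 : m.+1%:R = m.+2%:R - 1 :> R by rewrite -[m.+2%:R]natr1 addrK.
rewrite Km1 -[m.+3%:R]natr1 in es s3.
set K := m.+2%:R in K_ge2 es as_ cs s3 *; set Q := rho ^+ m.+1 in es as_ cs s3 *.
(* The constant 6 is where (K - 1)^2 + (K + 1)^2 + 2 (16/13)^2 K^2 <= 6 K^2 for K >= 2. *)
have rho2 : 1 <= 256 / 169 * rho ^+ 2 by nra.
have K2 : 4 <= K ^+ 2 by nra.
have := ler_wpM2l (sqr_ge0 (K * Q)) rho2; have := ler_wpM2l (sqr_ge0 (rho * Q)) K2.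
clearbody K Q; rewrite !exprMn in es as_ cs s3 *; nra.
Qed.

Lemma Amat_root_conditions (R : realFieldType) (c delta q lam l : R) :
  0 <= c < 1 -> 0 < delta <= q -> 0 <= lam -> 0 <= l -> 16 * l <= 1 - c ->
  4 * (1 - c) * l <= lam * (q - c * delta) -> delta * lam <= 1 -> q * lam <= 1 + c ->
  let b := 1 + c - q * lam in let e := (1 - delta * lam) * c in let rho := 1 - 3 * l in
  [/\ 0 <= b, 0 <= e, e <= rho ^+ 2, b <= 2 * rho & 0 <= rho ^+ 2 - b * rho + e].
Proof.
move=> /andP[c_ge0 c_lt1] /andP[delta_gt0 delta_le] lam_ge0 l_ge0 l_le gap dlam_le qlam_le.
move=> b e rho; rewrite {}/b {}/e {}/rho.
have dlam_ge0 : 0 <= delta * lam := mulr_ge0 (ltW delta_gt0) lam_ge0.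
split; [lra | by rewrite mulr_ge0 // subr_ge0 | nra | nra |].
have -> : (1 - 3 * l) ^+ 2 - (1 + c - q * lam) * (1 - 3 * l) + (1 - delta * lam) * c
          = lam * (q - c * delta) - 3 * l * (1 - c + q * lam) + 9 * l ^+ 2 by ring.
have qlam_le_gap : q * lam * (1 - c) <= lam * (q - c * delta).
  have : 0 <= c * lam * (q - delta) by rewrite !mulr_ge0 // subr_ge0.
  nra.
suff : 0 <= (1 - c) * (lam * (q - c * delta) - 3 * l * (1 - c + q * lam) + 9 * l ^+ 2).
  by rewrite pmulr_rge0 // subr_gt0.
move: gap qlam_le_gap; set P := lam * (q - c * delta) => gap qlam_le_gap.
have l3_ge0 : 0 <= 3 * l by lra.
have rho_c_ge0 : 0 <= 1 - c - 3 * l by lra.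
have := ler_wpM2r rho_c_ge0 gap; have := ler_wpM2l l3_ge0 qlam_le_gap.
have : 0 <= (1 - c) * l * (1 - c - 3 * l) by rewrite !mulr_ge0 //; lra.
nra.
Qed.

Lemma specnorm_Amat_exp_le (R : realType) (c delta q lam l : R) K :
  (2 <= K)%N -> 0 <= c < 1 -> 0 < delta <= q -> 0 <= l -> 16 * l <= 1 - c ->
  4 * (1 - c) * l <= lam * (q - c * delta) -> delta * lam <= 1 -> q * lam <= 1 + c ->
  specnorm (Amat c delta q lam ^+ K) <= Num.sqrt 6 * (K%:R * (1 - 3 * l) ^+ K).
Proof.
case: K => [|[|m]] // _ c_bds delta_bds l_ge0 l_le gap dlam_le qlam_le.
have /andP[c_ge0 c_lt1] := c_bds; have /andP[delta_gt0 delta_le] := delta_bds.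
have lam_ge0 : 0 <= lam.
  by rewrite -(@pmulr_lge0 _ (q - c * delta)); nra.
have [b_ge0 e_ge0 e_le b_le disc] :=
  Amat_root_conditions c_bds delta_bds lam_ge0 l_ge0 l_le gap dlam_le qlam_le.
rewrite Amat_mx2 mx2_exp_lucasU; apply: le_trans (specnorm_mx2_le _ _ _ _) _.
have dlam_ge0 : 0 <= delta * lam := mulr_ge0 (ltW delta_gt0) lam_ge0.
have rho_ge : 13 / 16 <= 1 - 3 * l by lra.
have bound_ge0 : 0 <= Num.sqrt 6 * (m.+2%:R * (1 - 3 * l) ^+ m.+2).
  by rewrite mulr_ge0 ?sqrtr_ge0 // mulr_ge0 // exprn_ge0 //; lra.
rewrite -(ger0_norm bound_ge0) -sqrtr_sqr ler_wsqrtr //.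
rewrite (exprMn _ (Num.sqrt 6)) sqr_sqrtr // !mulNr !sqrrN.
apply: companion_frobenius_le (lucasU_bound b_ge0 e_ge0 e_le b_le disc) => //;
  rewrite ?ger0_norm //; lra.
Qed.

Lemma le1BV_ln (R : realType) (x : R) : 0 < x -> 1 - x^-1 <= ln x.
Proof.
move=> x_gt0; have xV_gt0 : 0 < x^-1 by rewrite invr_gt0.
have := @le_ln1Dx _ (x^-1 - 1); rewrite [1 + _]addrC subrK lnV ?posrE //; lra.
Qed.

Lemma exprD1_le_expR (R : realType) (x : R) k :
  -1 <= x -> (1 + x) ^+ k <= expR (x * k%:R).
Proof.
move=> x_ge; rewrite expRM_natr; apply: lerXn2r; rewrite ?nnegrE ?expR_ge1Dx //; lra.
Qed.

Lemma exprBn_le_invX (R : realType) (x l : R) (m K : nat) :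
  0 < x -> m%:R * l <= 1 -> l * K%:R = ln x -> (1 - m%:R * l) ^+ K <= (x ^+ m)^-1.
Proof.
move=> x_gt0 ml_le1 lK.
have ml_ge : -1 <= - (m%:R * l) by lra.
apply: le_trans (exprD1_le_expR K ml_ge) _.
by rewrite mulNr -mulrA lK expRN expRM_natl lnK.
Qed.

Lemma log2_ge1 (R : realType) (x : R) : 2 <= x -> 1 <= log2 x.
Proof.
move=> x_ge2; have ln2_gt0 : 0 < ln (2 : R) by rewrite ln_gt0 // ltr1n.
by rewrite /log2 ler_pdivlMr // mul1r ler_ln ?posrE //; lra.
Qed.

Lemma sqrt6_div_le1 (R : realType) (x : R) : 2 <= x -> Num.sqrt 6 / (x ^+ 2 * log2 x) <= 1.
Proof.
move=> x_ge2; have L_ge1 := log2_ge1 x_ge2; have x2_ge4 : 4 <= x ^+ 2 by nra.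
have sqrt6_le3 : Num.sqrt 6 <= 3 :> R.
  by rewrite -ler_sqr ?nnegrE ?sqrtr_ge0 // sqr_sqrtr //; lra.
rewrite ler_pdivrMr ?mul1r; first nra.
by rewrite mulr_gt0 //; lra.
Qed.

Theorem mainTheorem13 (R : realType) (n K : nat) (c delta q lam : R)
  (hn : (16 <= n)%N)
  (hK : K%:R = n%:R / log2 (n%:R : R))
  (hc0 : 0 <= c) (hc1 : c < 1)
  (hd0 : 0 < delta) (hdq : delta <= q)
  (hKc : K%:R * (1 - c) >= 16 * ln (n%:R : R))
  (hlam : lam >= 4 * (1 - c) * ln (n%:R : R) / ((q - c * delta) * K%:R))
  (hdl : delta * lam <= 1)
  (hql : q * lam <= 1 + c) :
  specnorm (Amat c delta q lam ^+ K) <=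
    Num.sqrt 6 / (n%:R ^+ 2 * log2 (n%:R : R))
  /\ Num.sqrt 6 / (n%:R ^+ 2 * log2 (n%:R : R)) <= 1.
Proof.
set N : R := n%:R in hK hKc hlam *; set Kr : R := K%:R in hK hKc hlam *.
have N_ge16 : 16 <= N by rewrite ler_nat.
split; last by apply: sqrt6_div_le1; lra.
have lnN_ge : 15 / 16 <= ln N.
  have : N^-1 <= 16^-1 by rewrite lef_pV2 ?posrE //; lra.
  have := le1BV_ln (_ : 0 < N); lra.
have Kr_ge15 : 15 <= Kr.
  have : 0 <= Kr * c by rewrite mulr_ge0.
  by rewrite mulrBr mulr1 in hKc; lra.
have K_ge2 : (2 <= K)%N by rewrite -(ler_nat R); lra.
have Kr_gt0 : 0 < Kr by lra.
have gap_gt0 : 0 < q - c * delta by nra.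
set l := ln N / Kr.
have lK : l * Kr = ln N by rewrite divfK // gt_eqF.
have l_le : 16 * l <= 1 - c by rewrite mulrA ler_pdivrMr // [_ * Kr]mulrC.
have gap : 4 * (1 - c) * l <= lam * (q - c * delta).
  move: hlam; rewrite ler_pdivrMr ?mulr_gt0 // mulrA => hlam.
  by rewrite /l mulrA ler_pdivrMr.
have c_bds : 0 <= c < 1 by apply/andP.
have delta_bds : 0 < delta <= q by apply/andP.
have l_ge0 : 0 <= l by apply: divr_ge0; lra.
apply: le_trans (specnorm_Amat_exp_le K_ge2 c_bds delta_bds l_ge0 l_le gap hdl hql) _.
have rhoK : (1 - 3 * l) ^+ K <= (N ^+ 3)^-1 by apply: exprBn_le_invX; lra.
apply: le_trans (ler_wpM2l (sqrtr_ge0 6) (ler_wpM2l (ler0n _ K) rhoK)) _.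
have log2N : log2 N = N / Kr by rewrite hK invf_div mulrC divfK // gt_eqF //; lra.
rewrite log2N [X in _ <= X](_ : _ = Num.sqrt 6 * (Kr * (N ^+ 3)^-1)) //.
by field; rewrite !gt_eqF //; lra.
Qed.
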